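(* Let $\sigma_{naive}$ be naive semantics. For every two argumentation frameworks $AF=(AR,Attacks)$, $AF'=(AR',Attacks')$ with $AF\preceq_N AF'$ and every $E\in\sigma_{naive}(AF)$, there exists $E'\in\sigma_{naive}(AF')$ with $E'\not\subseteq AR$ or $E'=E$.
   Context: An argumentation framework is a pair $(AR,Attacks)$ with $AR$ a finite set and $Attacks\subseteq AR\times AR$; $a$ attacks $b$ iff $(a,b)\in Attacks$. A set $S\subseteq AR$ is conflict-free iff no element of $S$ attacks an element of $S$. $\sigma_{naive}(AF)$ is the set of all $\subseteq$-maximal conflict-free subsets of $AR$. $AF\preceq_N AF'$ (normal expansion) iff $AR\subseteq AR'$, $Attacks\subseteq Attacks'$ and no $(a,b)\in Attacks'\setminus Attacks$ has both $a,b\in AR$. *)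

From mathcomp Require Import all_boot.
Set Implicit Arguments. Unset Strict Implicit. Unset Printing Implicit Defensive.

Record AF (T : finType) := mkAF {
  AR : {set T};
  Att : {set T * T};
  Att_sub : Att \subset setX AR AR
}.

Definition attacks (T : finType) (F : AF T) (a b : T) : bool := (a, b) \in Att F.

Definition conflict_free (T : finType) (F : AF T) (S : {set T}) : bool :=
  (S \subset AR F) && [forall a in S, forall b in S, ~~ attacks F a b].

Definition naive (T : finType) (F : AF T) (E : {set T}) : Prop :=
  conflict_free F E /\
  (forall S : {set T}, conflict_free F S -> E \subset S -> S = E).

Definition normal_expansion (T : finType) (F F' : AF T) : Prop :=
  AR F \subset AR F' /\ Att F \subset Att F' /\
  (forall a b : T, (a, b) \in Att F' -> (a, b) \notin Att F ->
     ~ (a \in AR F /\ b \in AR F)).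

From mathcomp Require Import all_boot.

Set Implicit Arguments.
Unset Strict Implicit.
Unset Printing Implicit Defensive.

(* A normal expansion adds no attack between old arguments, so on subsets of
   [AR F] conflict-freeness is the same in [F] and [F'].  Extend a naive
   extension [E] of [F] to a maximal conflict-free set [E'] of [F']; if [E']
   stays inside [AR F] it is conflict-free in [F], and maximality of [E]
   forces [E' = E]. *)

Lemma conflict_freeP (T : finType) (F : AF T) (S : {set T}) :
  reflect (S \subset AR F /\ {in S &, forall a b, ~~ attacks F a b})
          (conflict_free F S).
Proof.
apply: (iffP andP) => -[sS cf]; split=> //.
  by move=> a b aS bS; move/forall_inP/(_ a aS)/forall_inP: cf; apply.
by apply/forall_inP => a aS; apply/forall_inP => b bS; apply: cf.
Qed.

Lemma conflict_free_normal_expansion (T : finType) (F F' : AF T) (S : {set T}) :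
  normal_expansion F F' -> S \subset AR F ->
  conflict_free F' S = conflict_free F S.
Proof.
move=> [sAR [sAtt newAtt]] sS; apply/conflict_freeP/conflict_freeP => -[_ cf].
  split=> // a b aS bS; apply: contra (cf a b aS bS); exact: (subsetP sAtt).
split; first exact: subset_trans sS sAR.
move=> a b aS bS; apply/negP => ab.
by apply: (newAtt a b ab (cf a b aS bS)); rewrite !(subsetP sS).
Qed.

Lemma naive_maxset (T : finType) (F : AF T) (E : {set T}) :
  naive F E <-> maxset (conflict_free F) E.
Proof.
split=> [[cfE maxE] | /maxsetP[cfE maxE]]; last by [].
by apply/maxsetP; split=> // S cfS sES; rewrite (maxE S cfS sES).
Qed.

Lemma naive_exists_superset (T : finType) (F : AF T) (S : {set T}) :
  conflict_free F S -> exists2 E, naive F E & S \subset E.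
Proof.
by move=> cfS; have [E maxE sSE] := maxset_exists cfS; exists E => //; apply/naive_maxset.
Qed.

Theorem proposition36 (T : finType) (F F' : AF T) :
  normal_expansion F F' ->
  forall E : {set T}, naive F E ->
  exists E' : {set T}, naive F' E' /\ (~~ (E' \subset AR F) \/ E' = E).
Proof.
move=> FF' E [cfE maxE].
have sEAR : E \subset AR F by case/andP: cfE.
have cfE' : conflict_free F' E by rewrite (conflict_free_normal_expansion FF' sEAR).
have [E' naiveE' sEE'] := naive_exists_superset cfE'.
exists E'; split=> //.
have [sE'AR | ] := boolP (E' \subset AR F); [right | by left].
apply: maxE sEE'.
by rewrite -(conflict_free_normal_expansion FF' sE'AR); case: naiveE'.
Qed.
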